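(* Let $f,g$ be non-constant rational functions on $\mathbb P^1$ over $\mathbb F_q$ of the same degree $d\ge2$ such that $\Gamma_{f,g}=\{(P,Q)\in\mathbb P^1\times\mathbb P^1: f(P)=g(Q)\}$ is absolutely irreducible and reduced, and let $C_n=\{(P_1,\dots,P_n)\in(\mathbb P^1)^n : f(P_i)=g(P_{i+1}),\ 1\le i\le n-1\}$. A geometric point $(P_1,\dots,P_n)\in C_n$ is singular if and only if there exist $1\le i<j\le n$ such that $f$ is ramified at $P_i$ and $g$ is ramified at $P_j$. *)

From HB Require Import structures.
From mathcomp Require Import all_boot all_order all_algebra all_field.
Set Implicit Arguments. Unset Strict Implicit. Unset Printing Implicit Defensive.
Import Order.TTheory GRing.Theory Num.Theory.
Local Open Scope ring_scope.

(* A rational function on P^1 over F is given by a pair (num, den) of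
   coprime polynomials; its degree is max(deg num, deg den). *)
Definition rdeg (F : fieldType) (p q : {poly F}) : nat :=
  maxn (size p).-1 (size q).-1.

(* Points of P^1(K): [Some a] is the point [X0:X1] = [1:a] (affine
   coordinate x = a), [None] is the point at infinity [0:1]. *)

(* Local affine chart coordinate of a point: x for Some a (value a),
   u = X0/X1 for the point at infinity (value 0). *)
Definition coord (K : fieldType) (P : option K) : K := odflt 0 P.

(* The homogenisation (of degree d) of p, dehomogenised in the chart
   containing P, as a polynomial in the local chart coordinate. *)
Definition chart (F K : fieldType) (iota : {rmorphism F -> K}) (d : nat)
  (p : {poly F}) (P : option K) : {poly K} :=
  match P with
  | Some _ => map_poly iota p
  | None => \poly_(i < d.+1) iota p`_(d - i)
  end.

(* homogeneous coordinate (up to the chart scaling) of p at P *)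
Definition hval (F K : fieldType) (iota : {rmorphism F -> K}) (d : nat)
  (p : {poly F}) (P : option K) : K := (chart iota d p P).[coord P].

(* Ramification of f = p/q at the geometric point P: the ramification index
   (order of vanishing of  beta*N - alpha*D  at P in the local coordinate,
   where f(P) = [alpha : beta] = [N(P) : D(P)]) is > 1. *)
Definition ramified (F K : fieldType) (iota : {rmorphism F -> K}) (d : nat)
  (p q : {poly F}) (P : option K) : bool :=
  let N := chart iota d p P in let D := chart iota d q P in
  let t := coord P in
  (1 < mup t (D.[t] *: N - N.[t] *: D))%N.

(* Polynomials in four variables X0, X1, Y0, Y1 over K. *)
Definition R4 (K : fieldType) := {poly {poly {poly {poly K}}}}.
Definition cst4 (K : fieldType) (c : K) : R4 K := c%:P%:P%:P%:P.
Definition vX0 (K : fieldType) : R4 K := 'X%:P%:P%:P.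
Definition vX1 (K : fieldType) : R4 K := 'X%:P%:P.
Definition vY0 (K : fieldType) : R4 K := 'X%:P.
Definition vY1 (K : fieldType) : R4 K := 'X.

(* degree-d homogenisation of p in the variables (A, B) = (X0, X1),
   with affine coordinate x = X1 / X0 *)
Definition homog (F K : fieldType) (iota : {rmorphism F -> K}) (d : nat)
  (p : {poly F}) (A B : R4 K) : R4 K :=
  \sum_(i < d.+1) cst4 (iota p`_i) * A ^+ (d - i) * B ^+ i.

(* The bihomogeneous equation of Gamma_{f,g} = {(P,Q) : f(P) = g(Q)}
   in P^1 x P^1, with f = fN/fD, g = gN/gD of degree d. *)
Definition GammaPoly (F K : fieldType) (iota : {rmorphism F -> K}) (d : nat)
  (fN fD gN gD : {poly F}) : R4 K :=
  homog iota d fN (vX0 K) (vX1 K) * homog iota d gD (vY0 K) (vY1 K)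
  - homog iota d fD (vX0 K) (vX1 K) * homog iota d gN (vY0 K) (vY1 K).

Definition irreducible_elt (R : idomainType) (x : R) : Prop :=
  x != 0 /\ x \isn't a GRing.unit /\
  forall a b : R, x = a * b -> a \is a GRing.unit \/ b \is a GRing.unit.

Definition on_Cn (F K : fieldType) (iota : {rmorphism F -> K}) (d : nat)
  (fN fD gN gD : {poly F}) (n : nat) (P : 'I_n -> option K) : Prop :=
  forall i j : 'I_n, val j = (val i).+1 ->
    hval iota d fN (P i) * hval iota d gD (P j)
    = hval iota d fD (P i) * hval iota d gN (P j).

Definition extP (K : fieldType) (n : nat) (P : 'I_n -> option K) (k : nat)
  : option K :=
  match (insub k : option 'I_n) with Some i => P i | None => None end.

(* Partial derivatives of the local equation
   E(s,t) = fN_P(s) gD_Q(t) - fD_P(s) gN_Q(t) of Gamma at (P,Q)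
   with respect to the local coordinates s (of P) and t (of Q). *)
Definition dE1 (F K : fieldType) (iota : {rmorphism F -> K}) (d : nat)
  (fN fD gN gD : {poly F}) (P Q : option K) : K :=
  (chart iota d fN P)^`().[coord P] * hval iota d gD Q
  - (chart iota d fD P)^`().[coord P] * hval iota d gN Q.
Definition dE2 (F K : fieldType) (iota : {rmorphism F -> K}) (d : nat)
  (fN fD gN gD : {poly F}) (P Q : option K) : K :=
  hval iota d fN P * (chart iota d gD Q)^`().[coord Q]
  - hval iota d fD P * (chart iota d gN Q)^`().[coord Q].

(* Jacobian matrix at (P_1..P_n) of the n-1 local defining equations
   E_i(t_i, t_{i+1}) = 0 of C_n in the product of local affine charts. *)
Definition jacCn (F K : fieldType) (iota : {rmorphism F -> K}) (d : nat)
  (fN fD gN gD : {poly F}) (n : nat) (P : 'I_n -> option K) : 'M[K]_(n.-1, n) :=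
  \matrix_(i < n.-1, j < n)
    if val j == val i then dE1 iota d fN fD gN gD (extP P i) (extP P i.+1)
    else if val j == (val i).+1 then dE2 iota d fN fD gN gD (extP P i) (extP P i.+1)
    else 0.

(* C_n is a curve (dimension 1) cut out in (P^1)^n by n-1 equations;
   a point is singular iff the Jacobian criterion fails: rank < n - 1. *)
Definition singular_Cn (F K : fieldType) (iota : {rmorphism F -> K}) (d : nat)
  (fN fD gN gD : {poly F}) (n : nat) (P : 'I_n -> option K) : Prop :=
  (\rank (jacCn iota d fN fD gN gD P) < n.-1)%N.

(* C_n is cut out in (P^1)^n by the n-1 equations E_i(P_i, P_(i+1)) = 0, each
   involving two consecutive coordinates only, so its Jacobian is bidiagonal.
   Since f(P_i) = g(P_(i+1)), the diagonal entry dE_i/dt_i vanishes iff f is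
   ramified at P_i, and dE_i/dt_(i+1) vanishes iff g is ramified at P_(i+1):
   both reduce to the vanishing of a Wronskian D(t) N'(t) - N(t) D'(t), i.e. to
   t being a double root of D(t) N - N(t) D.  Finally an (m x m+1) bidiagonal
   matrix with diagonals a, b drops rank iff a_i = b_j = 0 for some i <= j:
   the first and last nonzero entries of a null row vector produce such a pair,
   and conversely such a pair with i maximal supports an explicit null vector. *)

From Pilot Require Import Defs.
From HB Require Import structures.
From mathcomp Require Import all_boot all_order all_algebra all_field.
From mathcomp Require Import ring zify.
Import Order.TTheory GRing.Theory Num.Theory.
Local Open Scope ring_scope.
Set Implicit Arguments. Unset Strict Implicit.

Lemma rank_lt_rowsP (K : fieldType) m n (M : 'M[K]_(m, n)) :
  reflect (exists2 v : 'rV_m, v != 0 & v *m M = 0) (\rank M < m)%N.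
Proof.
apply: (iffP idP) => [lt_rank|[v v_neq0 vM0]].
  have : ~~ row_free M by rewrite /row_free neq_ltn lt_rank.
  by rewrite -kermx_eq0 => /rowV0Pn [v /sub_kermxP vM0 v_neq0]; exists v.
rewrite ltn_neqAle rank_leq_row andbT; apply: contra v_neq0 => M_free.
by rewrite -(mulmx_free_eq0 _ M_free) vM0.
Qed.

Section Bidiagonal.
Variables (K : fieldType) (m : nat) (a b : nat -> K).

Definition bidiag : 'M[K]_(m, m.+1) :=
  \matrix_(i < m, j < m.+1)
    (if val j == val i then a i else if val j == (val i).+1 then b i else 0).

Definition bidiag_col (c : nat -> K) (k : nat) : K :=
  c k * a k + (if k is k'.+1 then c k' * b k' else 0).

Definition row_seq (v : 'rV[K]_m) (k : nat) : K :=
  if insub k is Some i then v 0 i else 0.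

Lemma row_seq_ord v (i : 'I_m) : row_seq v i = v 0 i.
Proof. by rewrite /row_seq valK. Qed.

Lemma row_seq_ge v k : (m <= k)%N -> row_seq v k = 0.
Proof. by move=> le_mk; rewrite /row_seq insubN // -leqNgt. Qed.

Lemma row_seq_mx (c : nat -> K) :
  (forall k, (m <= k)%N -> c k = 0) -> row_seq (\row_(l < m) c l) =1 c.
Proof.
move=> c_ge k; rewrite /row_seq; case: insubP => [i _ <-|]; first by rewrite mxE.
by rewrite -leqNgt => /c_ge ->.
Qed.

Lemma sum_row_seq_eq (F : nat -> K) v k :
  \sum_(i < m | i == k :> nat) row_seq v i * F i = row_seq v k * F k.
Proof.
rewrite (big_ord1_eq _ (fun j => row_seq v j * F j)).
by case: ltnP => // le_mk; rewrite row_seq_ge ?mul0r.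
Qed.

Lemma mul_row_bidiag v (k : 'I_m.+1) :
  (v *m bidiag) 0 k = bidiag_col (row_seq v) k.
Proof.
rewrite mxE (eq_bigr (fun i : 'I_m => (if i == k :> nat then row_seq v i * a i else 0)
   + (if i.+1 == k :> nat then row_seq v i * b i else 0))); last first.
  move=> i _; rewrite mxE row_seq_ord !(eq_sym (val k)).
  case: eqP => [->|_]; first by rewrite (gtn_eqF (ltnSn _)) addr0.
  by rewrite add0r; case: eqP; rewrite ?mulr0.
rewrite big_split /= -!big_mkcond sum_row_seq_eq /bidiag_col.
case: k => [[|k] _] /=; last by under eq_bigl do rewrite eqSS; rewrite sum_row_seq_eq.
by rewrite big_pred0.
Qed.

Lemma eq_bidiag_col c c' : c =1 c' -> bidiag_col c =1 bidiag_col c'.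
Proof. by move=> eq_c [|k]; rewrite /bidiag_col !eq_c. Qed.

Lemma mul_row_bidiag_eq0 v :
  v *m bidiag = 0 <-> forall k, (k <= m)%N -> bidiag_col (row_seq v) k = 0.
Proof.
split=> [vM0 k le_km|col0].
  move/(congr1 (fun M : 'M_(1, m.+1) => M 0 (Ordinal (le_km : (k < m.+1)%N)))): vM0.
  by rewrite mul_row_bidiag mxE.
by apply/rowP => k; rewrite mul_row_bidiag mxE col0 // -ltnS.
Qed.

Lemma bidiag_null_zero_pair (c : nat -> K) :
  (forall k, (m <= k)%N -> c k = 0) -> (exists k, c k != 0) ->
  (forall k, (k <= m)%N -> bidiag_col c k = 0) ->
  exists i j, [/\ (i <= j < m)%N, a i = 0 & b j = 0].
Proof.
move=> c_ge c_neq0 col0.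
have lt_m k : c k != 0 -> (k < m)%N.
  by apply: contraR; rewrite -leqNgt => /c_ge ->.
have [i ci i_min] := ex_minnP c_neq0.
have [j cj j_max] := ex_maxnP c_neq0 (fun k ck => ltnW (lt_m k ck)).
have c_lt_i k : (k < i)%N -> c k = 0.
  by move=> lt_ki; apply/eqP; apply: contraTT lt_ki => /i_min; rewrite -leqNgt.
have c_gt_j k : (j < k)%N -> c k = 0.
  by move=> lt_jk; apply/eqP; apply: contraTT lt_jk => /j_max; rewrite -leqNgt.
exists i, j; split; first by rewrite j_max ?lt_m.
- have := col0 i (ltnW (lt_m _ ci)); rewrite /bidiag_col.
  have -> : (if i is i'.+1 then c i' * b i' else 0) = 0.
    by case: i c_lt_i {ci i_min} => // i c_lt; rewrite c_lt ?mul0r.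
  by rewrite addr0 => /eqP; rewrite mulf_eq0 (negPf ci) => /eqP.
- have := col0 j.+1 (lt_m _ cj); rewrite /bidiag_col c_gt_j // mul0r add0r.
  by move=> /eqP; rewrite mulf_eq0 (negPf cj) => /eqP.
Qed.

Definition bidiag_null_seq (i j k : nat) : K :=
  if (i <= k <= j)%N then \prod_(i <= l < k) (- b l / a l.+1) else 0.

Lemma bidiag_col_null_seq i j :
  a i = 0 -> b j = 0 -> (forall k, (i < k <= j)%N -> a k != 0) ->
  bidiag_col (bidiag_null_seq i j) =1 (fun=> 0).
Proof.
move=> ai0 bj0 a_neq0; set c := bidiag_null_seq i j.
have c_out k : ~~ (i <= k <= j)%N -> c k = 0 by rewrite /c /bidiag_null_seq => /negPf ->.
have cS k : (i <= k < j)%N -> c k.+1 = c k * (- b k / a k.+1).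
  move=> /andP[le_ik lt_kj]; rewrite /c /bidiag_null_seq big_nat_recr //=.
  by rewrite le_ik (ltnW lt_kj) leqW // lt_kj.
have ca0 k : ~~ (i < k <= j)%N -> c k * a k = 0.
  move=> out; have [->|ne_ki] := eqVneq k i; first by rewrite ai0 mulr0.
  by rewrite c_out ?mul0r //; lia.
have cb0 k : ~~ (i <= k < j)%N -> c k * b k = 0.
  move=> out; have [->|ne_kj] := eqVneq k j; first by rewrite bj0 mulr0.
  by rewrite c_out ?mul0r //; lia.
case=> [|k]; rewrite /bidiag_col; first by rewrite ca0 ?addr0.
have [ik|out] := boolP (i <= k < j)%N; last by rewrite ca0 ?cb0 ?addr0.
rewrite cS //; field; apply: a_neq0; lia.
Qed.

Lemma zero_pair_bidiag_null i j :
  (i <= j < m)%N -> a i = 0 -> b j = 0 ->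
  exists c : nat -> K, [/\ forall k, (m <= k)%N -> c k = 0, exists k, c k != 0
                       & forall k, bidiag_col c k = 0].
Proof.
move=> /andP[le_ij lt_jm] ai0 bj0.
have zero_le_j : exists k, (k <= j)%N && (a k == 0) by exists i; rewrite le_ij ai0 eqxx.
have le_j k : (k <= j)%N && (a k == 0) -> (k <= j)%N by case/andP.
have [i' /andP[le_i'j /eqP ai'0] i'_max] := ex_maxnP zero_le_j le_j.
exists (bidiag_null_seq i' j); split.
- by move=> k le_mk; rewrite /bidiag_null_seq (ltn_geF (leq_trans lt_jm le_mk)) andbF.
- by exists i'; rewrite /bidiag_null_seq leqnn le_i'j big_geq ?oner_neq0.
apply: bidiag_col_null_seq => // k /andP[lt_i'k le_kj].
by apply: contraTN lt_i'k => ak0; rewrite -leqNgt i'_max // le_kj ak0.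
Qed.

Lemma bidiag_rank_lt :
  (\rank bidiag < m)%N <-> exists i j, [/\ (i <= j < m)%N, a i = 0 & b j = 0].
Proof.
split=> [/rank_lt_rowsP [v v_neq0 /mul_row_bidiag_eq0 col0]|[i [j [ijm ai0 bj0]]]].
  apply: (bidiag_null_zero_pair (c := row_seq v)) col0; first exact: row_seq_ge.
  by have [k vk] := rV0Pn _ v_neq0; exists k; rewrite row_seq_ord.
have [c [c_ge [k ck] col0]] := zero_pair_bidiag_null ijm ai0 bj0.
have lt_km : (k < m)%N by apply: contraR ck; rewrite -leqNgt => /c_ge ->.
apply/rank_lt_rowsP; exists (\row_(l < m) c l).
  by apply/rV0Pn; exists (Ordinal lt_km); rewrite mxE.
by apply/mul_row_bidiag_eq0 => l _; rewrite (eq_bidiag_col (row_seq_mx c_ge)).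
Qed.
End Bidiagonal.

Lemma mup_gt1_root_deriv (K : fieldType) (h : {poly K}) t :
  h != 0 -> root h t -> (1 < mup t h)%N = root h^`() t.
Proof.
move=> h_neq0 /factor_theorem [q def_h]; rewrite mup_geq // def_h.
rewrite expr2 dvdp_mul2r ?polyXsubC_eq0 // dvdp_XsubCl.
by rewrite derivM derivXsubC mulr1 !rootE !hornerE subrr mulr0 add0r.
Qed.

Lemma proportional_scale (K : fieldType) (p q x y : K) :
  (p != 0) || (q != 0) -> p * y = q * x -> exists l, x = l * p /\ y = l * q.
Proof.
have [q0|q_neq0] := eqVneq q 0; last first.
  by move=> _ pyqx; exists (y / q); rewrite -(mulKf q_neq0 x) -pyqx; split; field.
rewrite q0 orbF mul0r => p_neq0 /eqP; rewrite mulf_eq0 (negPf p_neq0) => /eqP ->.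
by exists (x / p); rewrite mulr0 mulfVK.
Qed.

Lemma det2_eq0_proportional (K : fieldType) (p q x y u v : K) :
  (p != 0) || (q != 0) -> (x != 0) || (y != 0) -> p * y = q * x ->
  (u * y - v * x == 0) = (u * q - v * p == 0).
Proof.
move=> pq_neq0 xy_neq0 /(proportional_scale pq_neq0) [l [def_x def_y]].
have l_neq0 : l != 0 by apply: contraTneq xy_neq0 => l0; rewrite def_x def_y l0 !mul0r eqxx.
have -> : u * y - v * x = l * (u * q - v * p) by rewrite def_x def_y; ring.
by rewrite mulf_eq0 (negPf l_neq0).
Qed.

Lemma coprimep_scale_eq_size (K : fieldType) (A B : {poly K}) c e :
  coprimep A B -> (c != 0) || (e != 0) -> c *: A = e *: B ->
  (size A <= 1)%N && (size B <= 1)%N.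
Proof.
wlog c_neq0 : A B c e / c != 0.
  move=> W cop ce_neq0 eqAB; have [c0|c_neq0] := eqVneq c 0; last exact: (W A B c e c_neq0).
  move: ce_neq0 eqAB; rewrite c0 eqxx /= => e_neq0 eqAB; rewrite andbC.
  by apply: (W B A e 0) => //; rewrite ?e_neq0 1?coprimep_sym.
move=> cop _ eqAB.
have def_A : A = (e / c) *: B by rewrite mulrC -scalerA -eqAB scalerA mulVf ?scale1r.
have /eqP sizeB : size B == 1%N.
  by rewrite -coprimepp (coprimep_dvdr _ cop) // def_A -mul_polyC dvdp_mull.
by rewrite def_A (leq_trans (size_scale_leq _ _)) sizeB.
Qed.
Section Charts.
Variables (F K : fieldType) (iota : {rmorphism F -> K}) (d : nat).

Lemma rdeg_size (p q : {poly F}) :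
  rdeg p q = d -> (size p <= d.+1)%N && (size q <= d.+1)%N.
Proof. rewrite /rdeg => <-; lia. Qed.

Lemma chart_scale_eq (p q : {poly F}) X c e :
  (size p <= d.+1)%N -> (size q <= d.+1)%N ->
  c *: chart iota d p X = e *: chart iota d q X ->
  c *: map_poly iota p = e *: map_poly iota q.
Proof.
case: X => [x|] //= size_p size_q eq_chart; apply/polyP => k.
rewrite !coefZ !coef_map /=; have [le_kd|lt_dk] := leqP k d.
  have := congr1 (fun r : {poly K} => r`_(d - k)) eq_chart.
  by rewrite /= !coefZ !coef_poly ltnS leq_subr subKn.
by rewrite !nth_default ?rmorph0 ?mulr0 // (leq_trans _ lt_dk).
Qed.

Lemma hval_neq0 (p q : {poly F}) X : coprimep p q -> rdeg p q = d -> (0 < d)%N ->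
  (hval iota d p X != 0) || (hval iota d q X != 0).
Proof.
move=> cop rd d_gt0; rewrite /hval; case: X => [x|] /=.
  have [px|] := boolP (root (map_poly iota p) x); last by rewrite -rootE => ->.
  have cop_K : coprimep (map_poly iota p) (map_poly iota q) by rewrite coprimep_map.
  by rewrite (coprimep_root cop_K px) orbT.
rewrite !horner_coef0 !coef_poly /= subn0 !fmorph_eq0.
have coef_d_neq0 (r : {poly F}) : (size r).-1 = d -> r`_d != 0.
  by move=> size_r; rewrite -size_r -lead_coefE lead_coef_eq0 -size_poly_gt0; lia.
by move: rd; rewrite /rdeg /maxn; case: ltnP => _ /coef_d_neq0 ->; rewrite ?orbT.
Qed.

Lemma ramified_deriv (p q : {poly F}) X : coprimep p q -> rdeg p q = d -> (0 < d)%N ->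
  ramified iota d p q X =
  (hval iota d q X * (chart iota d p X)^`().[Defs.coord X]
   - hval iota d p X * (chart iota d q X)^`().[Defs.coord X] == 0).
Proof.
move=> cop rd d_gt0; have /andP[size_p size_q] := rdeg_size rd.
have := hval_neq0 X cop rd d_gt0; rewrite /ramified /hval orbC.
set N := chart iota d p X; set D := chart iota d q X; set t := Defs.coord X => DN_neq0.
have h_neq0 : D.[t] *: N - N.[t] *: D != 0.
  rewrite subr_eq0; apply: contraTneq d_gt0 => /(chart_scale_eq size_p size_q).
  move/(coprimep_scale_eq_size _ DN_neq0); rewrite coprimep_map !size_map_poly.
  by move=> /(_ cop); rewrite -leqNgt -rd /rdeg; lia.
rewrite mup_gt1_root_deriv //; last by rewrite rootE !hornerE mulrC subrr.
by rewrite rootE derivB !derivZ !hornerE.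
Qed.
End Charts.

Section JacobianEntries.
Variables (F K : fieldType) (iota : {rmorphism F -> K}) (d : nat).
Variables (fN fD gN gD : {poly F}).
Hypotheses (cop_f : coprimep fN fD) (cop_g : coprimep gN gD).
Hypotheses (deg_f : rdeg fN fD = d) (deg_g : rdeg gN gD = d) (d_gt0 : (0 < d)%N).

Let hv := hval iota d.

Lemma dE1_eq0 P Q : hv fN P * hv gD Q = hv fD P * hv gN Q ->
  (dE1 iota d fN fD gN gD P Q == 0) = ramified iota d fN fD P.
Proof.
move=> fPgQ; rewrite /dE1 ramified_deriv // [hv fD P * _]mulrC [hv fN P * _]mulrC.
by apply: det2_eq0_proportional fPgQ; apply: hval_neq0.
Qed.

Lemma dE2_eq0 P Q : hv fN P * hv gD Q = hv fD P * hv gN Q ->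
  (dE2 iota d fN fD gN gD P Q == 0) = ramified iota d gN gD Q.
Proof.
move=> fPgQ; rewrite /dE2 ramified_deriv // -oppr_eq0 opprB.
rewrite [hv fD P * _]mulrC [hv fN P * _]mulrC [hv gD Q * _]mulrC [hv gN Q * _]mulrC.
apply: det2_eq0_proportional; rewrite ?hval_neq0 //.
by rewrite mulrC -fPgQ mulrC.
Qed.
End JacobianEntries.

Lemma extP_ord (K : fieldType) n (P : 'I_n -> option K) (i : 'I_n) : extP P i = P i.
Proof. by rewrite /extP valK. Qed.

Lemma exists_extP_pair (K : fieldType) m (P : 'I_m.+1 -> option K)
    (A B : nat -> Prop) (R S : option K -> Prop) :
  (forall k, (k < m)%N -> A k <-> R (extP P k)) ->
  (forall k, (k < m)%N -> B k <-> S (extP P k.+1)) ->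
  (exists i j, [/\ (i <= j < m)%N, A i & B j]) <->
  exists i j : 'I_m.+1, (i < j)%N /\ R (P i) /\ S (P j).
Proof.
move=> AR BS; split=> [[i [j [/andP[le_ij lt_jm] Ai Bj]]]|[i [j [lt_ij [Ri Sj]]]]].
  have lt_im : (i < m.+1)%N by apply: leq_trans le_ij (ltnW _).
  exists (Ordinal lt_im), (Ordinal (lt_jm : (j.+1 < m.+1)%N)); split => //=.
  by rewrite -!extP_ord /= -AR -?BS ?(leq_ltn_trans le_ij).
have def_j : val j = j.-1.+1 by rewrite prednK // (leq_ltn_trans _ lt_ij).
have lt_jm : (j.-1 < m)%N by rewrite -ltnS -def_j ltn_ord.
exists i, j.-1; split; first by rewrite lt_jm andbT -ltnS -def_j.
  by apply/AR; rewrite ?extP_ord // (leq_trans lt_ij) // -ltnS.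
by apply/(BS _ lt_jm); rewrite -def_j extP_ord.
Qed.

Unset Implicit Arguments. Set Strict Implicit.

Theorem corollary2p5 (F : finFieldType) (K : closedFieldType)
  (iota : {rmorphism F -> K})
  (K_alg : forall x : K, exists2 r : {poly F}, r != 0 & root (map_poly iota r) x)
  (fN fD gN gD : {poly F}) (d : nat)
  (cop_f : coprimep fN fD) (cop_g : coprimep gN gD)
  (deg_f : rdeg fN fD = d) (deg_g : rdeg gN gD = d) (d_ge2 : (2 <= d)%N)
  (Gamma_irr_red : irreducible_elt (GammaPoly iota d fN fD gN gD))
  (n : nat) (n_gt0 : (0 < n)%N) (P : 'I_n -> option K)
  (P_on : on_Cn iota d fN fD gN gD P) :
  singular_Cn iota d fN fD gN gD P <->
  exists i j : 'I_n, (i < j)%N /\ ramified iota d fN fD (P i) /\ ramified iota d gN gD (P j).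
Proof.
have d_gt0 : (0 < d)%N by apply: leq_trans d_ge2.
case: n n_gt0 P P_on => // m _ P P_on.
set a := fun k => dE1 iota d fN fD gN gD (extP P k) (extP P k.+1).
set b := fun k => dE2 iota d fN fD gN gD (extP P k) (extP P k.+1).
have on_k k : (k < m)%N -> hval iota d fN (extP P k) * hval iota d gD (extP P k.+1)
                        = hval iota d fD (extP P k) * hval iota d gN (extP P k.+1).
  move=> lt_km; rewrite (extP_ord P (Ordinal (leqW lt_km))).
  by rewrite (extP_ord P (Ordinal (lt_km : (k.+1 < m.+1)%N))); exact: P_on.
rewrite -[singular_Cn _ _ _ _ _ _ _]/(is_true (\rank (bidiag m a b) < m)%N) bidiag_rank_lt.
apply: (exists_extP_pair (A := fun k => a k = 0) (B := fun k => b k = 0)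
  (R := ramified iota d fN fD) (S := ramified iota d gN gD)) => k /on_k fPgQ.
  by rewrite -(dE1_eq0 cop_f cop_g deg_f deg_g d_gt0 fPgQ); apply: rwP eqP.
by rewrite -(dE2_eq0 cop_f cop_g deg_f deg_g d_gt0 fPgQ); apply: rwP eqP.
Qed.
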